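(* For every $N\ge2$, the set $\mathbb{S}_N\setminus\{\mathrm{id}\}$ is a union of pairwise disjoint subsets, each of which is either (a) a single permutation $\sigma$ for which there is an entry $\beta$ with $\sigma(\beta+1)=\beta$ and all entries of $\sigma$ in positions after $\beta+1$ greater than $\beta$; or (b) a pair $\{\sigma,\sigma'\}$ of permutations that differ only by an interchange of two adjacent entries $\alpha,\beta$, such that some entry $\gamma$ with $\gamma<\alpha$ and $\gamma<\beta$ appears to the right of $\alpha$ and $\beta$.
   Context: Permutations are written in one-line notation $\sigma(1)\sigma(2)\cdots\sigma(N)$, and ''position $k$'' refers to the $k$-th entry $\sigma(k)$. *)

From mathcomp Require Import all_boot all_fingroup.
Set Implicit Arguments. Unset Strict Implicit. Unset Printing Implicit Defensive.

(* One-line notation: s(0) s(1) ... s(N-1), position k means entry s k.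
   (0-indexed; the conditions below are invariant under the shift
   1-indexed -> 0-indexed.) *)

Definition typeA (N : nat) (s : 'S_N) : Prop :=
  exists (b : 'I_N) (h : b.+1 < N),
    s (Ordinal h) = b /\ forall k : 'I_N, b.+1 < k -> b < s k.

Definition typeB (N : nat) (s s' : 'S_N) : Prop :=
  exists i j : 'I_N,
    [/\ val j = i.+1, s' i = s j, s' j = s i,
        (forall k : 'I_N, k != i -> k != j -> s' k = s k) &
        exists k : 'I_N, [/\ j < k, s k < s i & s k < s j]].

Definition good_block (N : nat) (B : {set 'S_N}) : Prop :=
  (exists s, B = [set s] /\ typeA s) \/
  (exists s s', B = [set s; s'] /\ typeB s s').

(** The blocks are the orbits of an involution [swap_last] on the non-identity
    permutations.  Call adjacent positions (i, i+1) swappable when some entry to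
    their right is smaller than both.  [swap_last] interchanges the entries at
    the rightmost swappable pair: this swap keeps the pair swappable and creates
    no swappable pair further right, so applying it twice is the identity, and
    each two-element orbit is a pair of type (b).  A permutation without
    swappable pairs is a fixed point; if it is not the identity, let p be its
    least non-fixed point: then p+1 must carry the entry p, since otherwise p
    would be a smaller entry to the right of (p, p+1), and this is type (a). *)

From mathcomp Require Import all_boot all_fingroup.
From mathcomp Require Import zify.
Set Implicit Arguments. Unset Strict Implicit. Unset Printing Implicit Defensive.

Section InvolutionPartition.
Variables (T : finType) (f : T -> T) (D : {set T}).
Hypotheses (fK : involutive f) (f_in : {mono f : x / x \in D}).

Lemma set2_involution_eq x y :
  ([set x; f x] == [set y; f y]) = (y == x) || (y == f x).
Proof.
apply/eqP/orP => [eq_xy | [/eqP-> | /eqP->]] //; last by rewrite fK setUC.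
by apply/orP; rewrite -in_set2 eq_xy set21.
Qed.

Lemma preim_partition_involution B :
  B \in preim_partition (fun x => [set x; f x]) D ->
  exists2 x, x \in D & B = [set x; f x].
Proof.
case/imsetP=> x xD ->; exists x => //; apply/setP => y.
rewrite !inE set2_involution_eq.
by case: eqP => [-> | _]; case: eqP => [-> | _]; rewrite ?f_in ?xD ?andbF.
Qed.

End InvolutionPartition.

Section AdjacentSwaps.
Variable N : nat.
Implicit Types (s : 'S_N) (i j k : 'I_N).

Definition swappable s i j : bool :=
  (j == i.+1 :> nat) && [exists k : 'I_N, [&& j < k, s k < s i & s k < s j]].

Definition last_swappable s i j : bool :=
  swappable s i j &&
  [forall p : 'I_N * 'I_N, swappable s p.1 p.2 ==> (p.1 <= i)].

Lemma swappable1 i j : ~~ swappable 1 i j.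
Proof.
apply/nandP; right; apply/existsPn => k.
by rewrite !perm1; apply/and3P => -[]; lia.
Qed.

Lemma swappable_suffix s s' i j :
  (forall k, i <= k -> s' k = s k) -> swappable s' i j = swappable s i j.
Proof.
move=> eq_suf; rewrite /swappable; case: eqP => //= ji.
by apply: eq_existsb => k; case: ltnP => //= jk; rewrite !eq_suf //; lia.
Qed.

Lemma tpermM_l i j s : (tperm i j * s)%g i = s j.
Proof. by rewrite permM tpermL. Qed.

Lemma tpermM_r i j s : (tperm i j * s)%g j = s i.
Proof. by rewrite permM tpermR. Qed.

Lemma tpermM_out i j s k : k != i -> k != j -> (tperm i j * s)%g k = s k.
Proof. by move=> ki kj; rewrite permM tpermD // eq_sym. Qed.

Lemma ord_neq k k' : (k : nat) != k' -> k != k'.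
Proof. exact: contra => /eqP->. Qed.

Lemma swappable_tpermM s i j :
  swappable s i j -> swappable (tperm i j * s)%g i j.
Proof.
case/andP=> /eqP ji /existsP[k /and3P[jk ki kj]].
rewrite /swappable ji eqxx; apply/existsP; exists k.
rewrite tpermM_l tpermM_r !tpermM_out; [by rewrite -ji jk ki kj | apply: ord_neq; lia..].
Qed.

Lemma last_swappable_next s i j j' : last_swappable s i j -> j' = j.+1 :> nat ->
  ~~ swappable (tperm i j * s)%g j j'.
Proof.
case/andP=> /andP[/eqP ji /existsP[k0 /and3P[jk0 k0i k0j]]] /forallP last_ij j'j.
have : ~~ swappable s j j' by apply/negP => /(implyP (last_ij (j, j'))) /=; lia.
rewrite /swappable j'j eqxx /= => /existsPn not_jj'.
apply/existsPn => k; apply/negP => /and3P[j'k].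
rewrite tpermM_r !tpermM_out; [move=> ki kj' | apply: ord_neq; lia..].
move: (not_jj' k); rewrite j'k kj' andbT /= -leqNgt => jk.
have [j'k0 | k0j'] := ltnP j' k0.
  by have := not_jj' k0; rewrite k0j -j'j j'k0 /= -leqNgt; lia.
have k0E : k0 = j' by apply: ord_inj; lia.
by subst k0; lia.
Qed.

Lemma last_swappable_tpermM s i j :
  last_swappable s i j -> last_swappable (tperm i j * s)%g i j.
Proof.
move=> ls_ij; have /andP[sw_ij /forallP last_ij] := ls_ij.
have /andP[/eqP ji _] := sw_ij.
rewrite /last_swappable swappable_tpermM //=; apply/forallP => -[i' j'] /=.
apply/implyP => sw'; rewrite leqNgt; apply/negP => ii'.
have /andP[/eqP j'i' _] := sw'.
have [i'j | i'j] := eqVneq (i' : nat) j.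
  move: sw'; rewrite (ord_inj i'j); apply/negP.
  by apply: last_swappable_next ls_ij _; lia.
move: sw'; rewrite (@swappable_suffix s) => [sw | k i'k].
  by have /= := implyP (last_ij (i', j')) sw; lia.
by rewrite tpermM_out //; apply: ord_neq; lia.
Qed.

Lemma last_swappable_uniq s i j i' j' :
  last_swappable s i j -> last_swappable s i' j' -> (i, j) = (i', j').
Proof.
case/andP=> /[dup] /andP[/eqP ji _] sw /forallP last_ij.
case/andP=> /[dup] /andP[/eqP j'i' _] sw' /forallP last_ij'.
have := implyP (last_ij (i', j')) sw'; have := implyP (last_ij' (i, j)) sw.
by move=> /= ii' i'i; congr pair; apply: val_inj => /=; lia.
Qed.

Lemma last_swappable_exists s i j :
  swappable s i j -> exists i' j', last_swappable s i' j'.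
Proof.
move=> sw; have [[i' j'] /= sw' last_ij'] :=
  @arg_maxnP _ (i, j) (fun p => swappable s p.1 p.2) (fun p => nat_of_ord p.1) sw.
exists i', j'; rewrite /last_swappable sw'; apply/forallP => p.
exact/implyP/last_ij'.
Qed.

Definition swap_last s : 'S_N :=
  if [pick p | last_swappable s p.1 p.2] is Some p
  then (tperm p.1 p.2 * s)%g else s.

Variant swap_last_spec s : 'S_N -> Prop :=
  | SwapLast i j of last_swappable s i j : swap_last_spec s (tperm i j * s)%g
  | SwapNone of (forall i j, ~~ swappable s i j) : swap_last_spec s s.

Lemma swap_lastP s : swap_last_spec s (swap_last s).
Proof.
rewrite /swap_last; case: pickP => [[i j] /= ls | no_ls]; first exact: SwapLast.
apply: SwapNone => i j; apply/negP => /last_swappable_exists[i' [j' ls]].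
by have := no_ls (i', j'); rewrite /= ls.
Qed.

Lemma swap_lastK : involutive swap_last.
Proof.
move=> s; case: (swap_lastP s) => [i j ls | no_sw].
  case: (swap_lastP (tperm i j * s)%g) => [i' j' ls' | ].
    case: (last_swappable_uniq (last_swappable_tpermM ls) ls') => <- <-.
    by rewrite mulgA tperm2 mul1g.
  by move=> /(_ i j); have /andP[] := last_swappable_tpermM ls => ->.
case: (swap_lastP s) => // i j /andP[sw _].
by have := no_sw i j; rewrite sw.
Qed.

Lemma last_swappable_neq1 s i j : last_swappable s i j -> s != 1%g.
Proof. by case/andP=> sw _; apply: contraTneq sw => ->; apply: swappable1. Qed.

Lemma swap_last_eq1 s : (swap_last s == 1%g) = (s == 1%g).
Proof.
case: swap_lastP => // i j ls.
rewrite (negbTE (last_swappable_neq1 ls)).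
exact/negbTE/last_swappable_neq1/last_swappable_tpermM/ls.
Qed.

Lemma last_swappable_typeB s i j :
  last_swappable s i j -> typeB s (tperm i j * s)%g.
Proof.
case/andP=> /andP[/eqP ji /existsP[k /and3P[jk ki kj]]] _.
exists i, j; split; rewrite ?tpermM_l ?tpermM_r //; last by exists k.
exact: tpermM_out.
Qed.

Lemma perm_fix_prefix_ge s (p : nat) (x : 'I_N) :
  (forall y : 'I_N, y < p -> s y = y) -> p <= x -> p <= s x.
Proof.
move=> fix_p px; rewrite leqNgt; apply/negP => sxp.
by have := perm_inj (fix_p _ sxp) => sxx; move: sxp; rewrite sxx; lia.
Qed.

Lemma no_swappable_typeA s :
  s != 1%g -> (forall i j, ~~ swappable s i j) -> typeA s.
Proof.
move=> s1 no_sw.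
have [x0 sx0] : exists x, s x != x.
  apply/existsP; apply: contraR s1 => /existsPn fixed; apply/eqP/permP => x.
  by rewrite perm1; apply/eqP; have := fixed x; rewrite negbK.
have [p sp p_min] := @arg_minnP _ x0 (fun x => s x != x) (@nat_of_ord N) sx0.
have fix_p (y : 'I_N) : y < p -> s y = y.
  by move=> yp; apply/eqP; apply: contraTT yp => /p_min; rewrite -leqNgt.
have ge_p := perm_fix_prefix_ge fix_p.
set q := (s^-1)%g p; have sq : s q = p by rewrite permKV.
have s_ne_p (x : 'I_N) : x != q -> (s x : nat) != p.
  by apply: contra => /eqP /ord_inj sxp; apply/eqP/(@perm_inj _ s); rewrite sq.
have q_ge : p <= q.
  rewrite leqNgt; apply/negP => qp.
  by have := fix_p q qp; rewrite sq => pq; rewrite -pq ltnn in qp.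
have q_ne : (p : nat) != q.
  by apply: contra sp => /eqP/ord_inj {1}->; rewrite sq.
have q_succ : q = p.+1 :> nat.
  apply/eqP; rewrite eqn_leq leqNgt; apply/andP; split; last by lia.
  apply/negP => p1q; have p1N : p.+1 < N by have := ltn_ord q; lia.
  have sp_gt : p < s p.
    by have := ge_p p (leqnn p); have := s_ne_p p (ord_neq q_ne); lia.
  have sp1_gt : p < s (Ordinal p1N).
    have p1_ne_q : Ordinal p1N != q by apply: ord_neq => /=; lia.
    by have := ge_p (Ordinal p1N) (leqnSn p); have := s_ne_p _ p1_ne_q; lia.
  apply: (negP (no_sw p (Ordinal p1N))).
  by rewrite /swappable /= eqxx; apply/existsP; exists q; rewrite sq; lia.
have p1N : p.+1 < N by rewrite -q_succ ltn_ord.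
exists p, p1N; split; first by rewrite (_ : Ordinal p1N = q) //; apply: ord_inj.
move=> k p1k; have k_ne_q : k != q by apply: ord_neq; lia.
by have := ge_p k (ltnW (ltnW p1k)); have := s_ne_p k k_ne_q; lia.
Qed.

End AdjacentSwaps.

Theorem lemma3p9 (N : nat) (hN : 2 <= N) :
  exists P : {set {set 'S_N}},
    partition P [set s : 'S_N | s != 1%g] /\
    forall B, B \in P -> good_block B.
Proof.
set D := [set s : 'S_N | s != 1%g].
have swap_last_in : {mono @swap_last N : s / s \in D} by move=> s; rewrite !inE swap_last_eq1.
exists (preim_partition (fun s => [set s; swap_last s]) D).
split=> [|B /(preim_partition_involution (@swap_lastK N) swap_last_in)[s]].
  exact: preim_partitionP.
rewrite inE => s1 ->; case: swap_lastP => [i j ls | no_sw].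
  by right; exists s, (tperm i j * s)%g; split; last exact: last_swappable_typeB.
by left; exists s; rewrite setUid; split; last exact: no_swappable_typeA.
Qed.
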